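(* Let $t\in\mathbb{N}$. There exists $n_0(t)$ such that for all $n\ge n_0(t)$, if $\mathcal{F}\subseteq\mathcal{M}_{2n-1}$ is $t$-intersecting, then $|\mathcal{F}|\le(2(n-t)-1)!!$.
   Context: $\mathcal{M}_{2n-1}$ is the set of near-perfect matchings of the complete graph $K_{2n-1}$ (matchings with $n-1$ edges). A family $\mathcal{F}\subseteq\mathcal{M}_{2n-1}$ is $t$-intersecting if $|m\cap m'|\ge t$ for all $m,m'\in\mathcal{F}$. $(2k-1)!!=1\cdot3\cdots(2k-1)$. *)

From mathcomp Require Import all_boot.
Set Implicit Arguments. Unset Strict Implicit. Unset Printing Implicit Defensive.

(* Double factorial of odd numbers: dfact k = (2k-1)!! = 1*3*...*(2k-1), dfact 0 = 1. *)
Fixpoint oddfact (k : nat) : nat :=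
  match k with 0 => 1 | k'.+1 => (k'.*2.+1) * oddfact k' end.

Definition is_edge (m : nat) (e : {set 'I_m}) : bool := #|e| == 2.

Definition is_matching (m : nat) (M : {set {set 'I_m}}) : bool :=
  [forall e in M, is_edge e] &&
  [forall e in M, forall f in M, (e != f) ==> [disjoint e & f]].

Definition near_perfect (n : nat) (M : {set {set 'I_(2*n-1)}}) : bool :=
  is_matching M && (#|M| == n - 1).

Definition t_intersecting (m t : nat) (F : {set {set {set 'I_m}}}) : bool :=
  [forall M in F, forall M' in F, t <= #|M :&: M'|].

(* Repeatedly remove from F the star F(S) (the members
   containing the matching S) of an S maximizing (2/3)^|S| |F(S)| / (2(n-|S|)-1)!!.
   Maximality makes F(S) spread: no further edge lies in more than 3/2 of its
   expected share of F(S).  Once the maximizer has more than q edges, at most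
   (2/3)^(q+1) (2n-1)!! members remain.  The centres S, S' of two spread stars
   meet in at least t edges: spreadness gives M in F(S) avoiding S' \ S and then
   M' in F(S') avoiding M \ S', so M :&: M' lies in S :&: S'.  Either all centres
   share a t-set T, and F lies essentially in the star of T, or every member
   containing a centre contains T + e for one of at most q^(t+1) pairs (T, e).
   With q of order t log n both cases give at most (2(n-t)-1)!! members for n
   large. *)

From mathcomp Require Import all_boot.
From mathcomp Require Import zify.
Set Implicit Arguments. Unset Strict Implicit. Unset Printing Implicit Defensive.

Lemma leq_card_bigcup (T I : finType) (A : {set I}) (C : I -> {set T}) :
  #|\bigcup_(i in A) C i| <= \sum_(i in A) #|C i|.
Proof.
elim/big_rec2: _ => [|i U s _ IH]; first by rewrite cards0.
by rewrite (leq_trans (leq_card_setU _ _)) ?leq_add2l.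
Qed.

Lemma leq_exp2rW m n e : m <= n -> m ^ e <= n ^ e.
Proof. by case: e => // e; rewrite leq_exp2r. Qed.

Lemma exists_common_notin (T : finType) (A B C : {set T}) :
  C \subset A -> ~~ (C \subset B) -> #|C| <= #|A :&: B| ->
  exists2 x, x \in A :&: B & x \notin C.
Proof.
move=> sCA nsCB leCAB; apply/exists_inP; apply: contraTT leCAB.
rewrite negb_exists_in -ltnNge => /forall_inP sABC.
apply: leq_ltn_trans (proper_card (properIl nsCB)).
apply/subset_leq_card/subsetP=> x xAB; move: (xAB); rewrite !inE => /andP[_ ->].
by rewrite andbT; apply/negPn/sABC.
Qed.

Lemma exists_card_subset (T : finType) (A : {set T}) k : k <= #|A| ->
  exists2 B : {set T}, B \subset A & #|B| = k.
Proof.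
move=> le_kA; have : 0 < #|[set B : {set T} | B \subset A & #|B| == k]|.
  by rewrite cards_draws bin_gt0.
by case/card_gt0P=> B; rewrite inE => /andP[sBA /eqP cB]; exists B.
Qed.

Lemma leq_bin_exp n k : 'C(n, k) <= n ^ k.
Proof.
rewrite -(leq_pmul2r (fact_gt0 k)) bin_ffact ffact_prod.
apply: (@leq_trans (\prod_(i < k) n)); first by apply: leq_prod => i _; apply: leq_subr.
by rewrite prod_nat_const card_ord leq_pmulr ?fact_gt0.
Qed.

Section Matchings.
Variable m : nat.
Implicit Types (U e : {set 'I_m}) (M N : {set {set 'I_m}}).

Lemma is_matchingP M :
  reflect ({in M, forall e, #|e| = 2} /\ trivIset M) (is_matching M).
Proof.
apply: (iffP andP) => [[/forall_inP E /forall_inP D]|[E /trivIsetP D]]; split.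
- by move=> e /E /eqP.
- apply/trivIsetP=> e f eM fM nef.
  by move/forall_inP/(_ f fM)/implyP: (D e eM); apply.
- by apply/forall_inP=> e /E /eqP.
- by apply/forall_inP=> e eM; apply/forall_inP=> f fM; apply/implyP; apply: D.
Qed.

Lemma matchingS M N : N \subset M -> is_matching M -> is_matching N.
Proof.
move=> sNM /is_matchingP[E D]; apply/is_matchingP; split.
  by move=> e /(subsetP sNM) /E.
exact: trivIsetS D.
Qed.

Lemma card_cover_matching M : is_matching M -> #|cover M| = 2 * #|M|.
Proof.
case/is_matchingP=> E /eqP <-.
by rewrite (eq_bigr (fun=> 2)) // sum_nat_const mulnC.
Qed.

Definition matchings_in U k :=
  [set M | [&& is_matching M, #|M| == k & cover M \subset U]].

Lemma matchings_in_small U k : #|U| < 2 * k -> matchings_in U k = set0.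
Proof.
move=> ltUk; apply/setP=> M; rewrite !inE.
apply/negP=> /and3P[mM /eqP cM /subset_leq_card].
by rewrite card_cover_matching // cM leqNgt ltUk.
Qed.

Lemma card_matchings_in0 U : #|matchings_in U 0| <= 1.
Proof.
rewrite -(cards1 (set0 : {set {set 'I_m}})) subset_leq_card //.
by apply/subsetP=> M; rewrite !inE => /and3P[_ /eqP/cards0_eq -> _].
Qed.

Lemma card_matchings_through U k u v :
  #|[set M in matchings_in U k.+1 | [set u; v] \in M]|
    <= #|matchings_in (U :\ u :\ v) k|.
Proof.
set e := [set u; v].
have injD : {in [set M in matchings_in U k.+1 | e \in M] &,
             injective (fun M => M :\ e)}.
  move=> M N; rewrite !inE => /andP[_ eM] /andP[_ eN] eMN.
  by rewrite -(setD1K eM) -(setD1K eN) eMN.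
rewrite -(card_in_imset injD) subset_leq_card //.
apply/subsetP=> _ /imsetP[M + ->]; rewrite !inE => /andP[/and3P[mM /eqP cM sMU] eM].
have [_ /trivIsetP D] := is_matchingP _ mM.
have cMe : #|M :\ e| = k by move: cM; rewrite (cardsD1 e M) eM add1n => -[].
rewrite (matchingS (subsetDl _ _) mM) cMe eqxx /=.
apply/bigcupsP=> f; rewrite !inE => /andP[nfe fM].
apply/subsetP=> x xf; have dfe := disjointFr (D _ _ fM eM nfe) xf.
rewrite !inE in dfe; rewrite !inE (subsetP sMU) ?andbT; last first.
  by apply/bigcupP; exists f.
by move/norP: dfe => [-> ->].
Qed.

Lemma matchings_in_split U k u : u \in U ->
  matchings_in U k.+1 \subset matchings_in (U :\ u) k.+1
    :|: \bigcup_(v in U :\ u) [set M in matchings_in U k.+1 | [set u; v] \in M].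
Proof.
move=> uU; apply/subsetP=> M MU; have := MU; rewrite !inE.
case/and3P=> mM cM /bigcupsP sMU; rewrite mM cM /=.
have [E _] := is_matchingP _ mM.
have [/exists_inP[e eM ue]|] := boolP [exists e in M, u \in e]; last first.
  move=> /exists_inPn ueM; apply/orP; left; apply/bigcupsP=> e eM.
  by apply/subsetP=> x xe; rewrite !inE (subsetP (sMU e eM)) // andbT;
     apply: contraNneq (ueM e eM) => <-.
have /cards1P[v ev] : #|e :\ u| == 1.
  by move: (E e eM); rewrite (cardsD1 u e) ue add1n => -[->].
have vD : v \in e :\ u by rewrite ev set11.
have Euv : [set u; v] = e by rewrite -(setD1K ue) ev.
apply/orP; right; apply/bigcupP; exists v; last by rewrite inE MU Euv eM.
by move: vD; rewrite !inE => /andP[-> /(subsetP (sMU e eM))].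
Qed.

Lemma card_matchings_in_rec U k u : u \in U ->
  #|matchings_in U k.+1| <= #|matchings_in (U :\ u) k.+1|
                             + \sum_(v in U :\ u) #|matchings_in (U :\ u :\ v) k|.
Proof.
move=> uU; apply: leq_trans (subset_leq_card (matchings_in_split k uU)) _.
apply: leq_trans (leq_card_setU _ _) _; rewrite leq_add2l.
apply: leq_trans (leq_card_bigcup _ _) _.
by apply: leq_sum => v _; apply: card_matchings_through.
Qed.

Lemma card_matchings_in k :
  (forall U, #|U| <= 2 * k -> #|matchings_in U k| <= oddfact k) /\
  (forall U, #|U| <= (2 * k).+1 -> #|matchings_in U k| <= oddfact k.+1).
Proof.
elim: k => [|k [IHeven IHodd]]; first by split=> U _; apply: card_matchings_in0.
have cardD1 U u : u \in U -> #|U :\ u| = #|U| - 1.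
  by move=> uU; rewrite (cardsD1 u U) uU add1n subn1.
have sum_le U u b : (forall v, v \in U :\ u -> #|matchings_in (U :\ u :\ v) k| <= b) ->
    \sum_(v in U :\ u) #|matchings_in (U :\ u :\ v) k| <= #|U :\ u| * b.
  by move=> le_b; rewrite -sum_nat_const leq_sum.
have even U : #|U| <= 2 * k.+1 -> #|matchings_in U k.+1| <= oddfact k.+1.
  move=> leU; have [->|[u uU]] := set_0Vmem U.
    by rewrite matchings_in_small ?cards0.
  have le_sum : \sum_(v in U :\ u) #|matchings_in (U :\ u :\ v) k| <= #|U :\ u| * oddfact k.
    by apply: sum_le => v vU; apply: IHeven; rewrite !cardD1 //; lia.
  rewrite (leq_trans (card_matchings_in_rec k uU)) //.
  rewrite (matchings_in_small (U := U :\ u)) ?cards0 ?add0n; last first.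
    by rewrite cardD1 //; lia.
  by apply: leq_trans le_sum _; rewrite cardD1 // [oddfact k.+1]/= leq_mul // -mul2n; lia.
split=> // U leU; have [->|[u uU]] := set_0Vmem U.
  by rewrite matchings_in_small ?cards0.
have le_sum : \sum_(v in U :\ u) #|matchings_in (U :\ u :\ v) k| <= #|U :\ u| * oddfact k.+1.
  by apply: sum_le => v vU; apply: IHodd; rewrite !cardD1 //; lia.
have le_first : #|matchings_in (U :\ u) k.+1| <= oddfact k.+1.
  by apply: even; rewrite cardD1 //; lia.
apply: leq_trans (card_matchings_in_rec k uU) _.
apply: leq_trans (leq_add le_first le_sum) _.
rewrite [oddfact k.+2]/= -[X in X + _]mul1n -mulnDl leq_mul2r cardD1 //.
by apply/orP; right; lia.
Qed.

End Matchings.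

Section Stars.
Variable n : nat.
Local Notation matching := {set {set 'I_(2 * n - 1)}}.
Implicit Types (S M : matching) (G : {set matching}).

Definition star G S := [set M in G | S \subset M].

Lemma card_star G S : (forall M, M \in G -> near_perfect M) ->
  #|star G S| <= oddfact (n - #|S|).
Proof.
move=> npG; have [->|[M0]] := set_0Vmem (star G S); first by rewrite cards0.
rewrite inE => /andP[/npG/andP[mM0 /eqP cM0] SM0].
have mS := matchingS SM0 mM0.
have leSn : #|S| <= n - 1 by rewrite -cM0 subset_leq_card.
have injD : {in star G S &, injective (fun M => M :\: S)}.
  move=> M N; rewrite !inE => /andP[_ SM] /andP[_ SN] eMN.
  by rewrite -(setID M S) -(setID N S) (setIidPr SM) (setIidPr SN) eMN.
rewrite -(card_in_imset injD).
apply: leq_trans (_ : _ <= #|matchings_in (~: cover S) (n - 1 - #|S|)|) _.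
  apply/subset_leq_card/subsetP=> _ /imsetP[M + ->].
  rewrite inE => /andP[/npG/andP[mM /eqP cM] SM].
  have [_ /trivIsetP D] := is_matchingP _ mM.
  rewrite inE (matchingS (subsetDl _ _) mM) cardsD (setIidPr SM) cM eqxx /=.
  apply/bigcupsP=> e; rewrite inE => /andP[eS eM]; rewrite subsets_disjoint setCK.
  apply/bigcup_disjointP=> f fS.
  by apply: D => //; [apply: (subsetP SM) | apply: contraNneq eS => ->].
apply: leq_trans ((card_matchings_in _ _).2 _ _) _.
  by rewrite cardsCs setCK card_ord card_cover_matching //; lia.
have -> : n - 1 - #|S| = n - #|S| - 1 by lia.
by case: (n - #|S|) => [|d]; rewrite ?subSS ?subn0.
Qed.

End Stars.

Lemma oddfact_gt0 k : 0 < oddfact k.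
Proof. by elim: k => //= k IHk; rewrite muln_gt0 IHk. Qed.

Lemma oddfactS k : oddfact k.+1 = (2 * k).+1 * oddfact k.
Proof. by rewrite /= -mul2n. Qed.

Fixpoint odd_ffact (n s : nat) : nat :=
  if s is s'.+1 then odd_ffact n s' * (2 * (n - s') - 1) else 1.

Lemma odd_ffact_oddfact n s : s <= n -> odd_ffact n s * oddfact (n - s) = oddfact n.
Proof.
elim: s => [|s IHs] le_sn /=; first by rewrite mul1n subn0.
rewrite -mulnA -IHs 1?ltnW //; congr (_ * _).
have -> : n - s = (n - s.+1).+1 by lia.
by rewrite oddfactS; congr (_ * _); lia.
Qed.

Lemma odd_ffact_gt0 n s : s <= n -> 0 < odd_ffact n s.
Proof.
by move=> le_sn; have := oddfact_gt0 n; rewrite -(odd_ffact_oddfact le_sn) muln_gt0 => /andP[].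
Qed.

Lemma leq_odd_ffact_exp n s : odd_ffact n s <= (2 * n) ^ s.
Proof. by elim: s => //= s IHs; rewrite expnSr leq_mul //; lia. Qed.

Lemma leq_oddfact_sub n s : s <= n -> oddfact n <= (2 * n) ^ s * oddfact (n - s).
Proof.
by move=> le_sn; rewrite -(odd_ffact_oddfact le_sn) leq_mul2r leq_odd_ffact_exp orbT.
Qed.

Section SpreadApproximation.
Variables n q : nat.
Local Notation matching := {set {set 'I_(2 * n - 1)}}.
Implicit Types (S M : matching) (G P SS : {set matching}).
Variable F : {set matching}.
Hypothesis npF : forall M, M \in F -> near_perfect M.

Lemma card_le_of_star G S : G \subset F -> star G S != set0 -> #|S| <= n - 1.
Proof.
move=> GF /set0Pn[M]; rewrite inE => /andP[/(subsetP GF)/npF/andP[_ /eqP <-] SM].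
exact: subset_leq_card.
Qed.

(* For #|S| <= n this is 3^n (2n-1)!! (2/3)^|S| |star G S| / (2(n-|S|)-1)!!,
   scaled to stay in nat. *)
Definition weight G S := #|star G S| * 2 ^ #|S| * 3 ^ (n - #|S|) * odd_ffact n #|S|.

(* An extra edge lies in a 1/(2(n-#|S|)-1) fraction of all near-perfect matchings
   containing S; P is spread if no extra edge exceeds 3/2 times that fraction. *)
Definition spread P S := forall e, e \notin S ->
  #|[set M in P | e \in M]| * (2 * (2 * (n - #|S|) - 1)) <= 3 * #|P|.

Definition spread_core S := exists P, [/\ P \subset star F S, P != set0 & spread P S].

Definition uncovered G SS := [set M in G | [forall S in SS, ~~ (S \subset M)]].

Lemma weight_set0 G : weight G set0 = #|G| * 3 ^ n.
Proof.
rewrite /weight.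
have -> : star G set0 = G by apply/setP=> M; rewrite inE sub0set andbT.
by rewrite cards0 subn0 !muln1.
Qed.

Lemma leq_weight G S : G \subset F -> #|S| <= n ->
  weight G S <= oddfact n * 2 ^ #|S| * 3 ^ (n - #|S|).
Proof.
move=> GF leSn; rewrite -(odd_ffact_oddfact leSn).
apply: (@leq_trans (oddfact (n - #|S|) * 2 ^ #|S| * 3 ^ (n - #|S|) * odd_ffact n #|S|)).
  by rewrite !leq_mul2r card_star ?orbT // => M /(subsetP GF)/npF.
by rewrite mulnC !mulnA.
Qed.

Lemma card_max_weight G S : G \subset F -> (forall S', weight G S' <= weight G S) ->
  #|G| * 3 ^ #|S| <= oddfact n * 2 ^ #|S|.
Proof.
move=> GF maxS; have := maxS set0; rewrite weight_set0.
have [S0|neS] := eqVneq (star G S) set0.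
  by rewrite /weight S0 cards0 !mul0n leqn0 muln_eq0 expn_eq0 orbF => /eqP->.
have leSn : #|S| <= n by have := card_le_of_star GF neS; lia.
have -> : 3 ^ n = 3 ^ #|S| * 3 ^ (n - #|S|) by rewrite -expnD subnKC.
by move/leq_trans/(_ (leq_weight GF leSn)); rewrite mulnA leq_pmul2r ?expn_gt0.
Qed.

Lemma spread_max_weight G S : G \subset F -> (forall S', weight G S' <= weight G S) ->
  spread (star G S) S.
Proof.
move=> GF maxS e eS.
have -> : [set M in star G S | e \in M] = star G (e |: S).
  by apply/setP=> M; rewrite !inE subUset sub1set [(e \in M) && _]andbC andbA.
have [-> | ne_eS] := eqVneq (star G (e |: S)) set0; first by rewrite cards0.
have card_eS : #|e |: S| = #|S|.+1 by rewrite cardsU1 eS.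
have := card_le_of_star GF ne_eS; rewrite card_eS => lt_Sn.
have := maxS (e |: S); rewrite /weight card_eS /=.
set d := 2 * (n - #|S|) - 1; set Q := odd_ffact n #|S|.
have -> : n - #|S| = (n - #|S|.+1).+1 by lia.
rewrite !expnS; set B := 3 ^ (n - #|S|.+1).
have QB_gt0 : 0 < 2 ^ #|S| * B * Q by rewrite !muln_gt0 !expn_gt0 odd_ffact_gt0 //; lia.
by move=> le_w; rewrite -(leq_pmul2r QB_gt0); clearbody d Q B; nia.
Qed.

Lemma uncoveredU1 G SS S : uncovered G (S |: SS) = uncovered (G :\: star G S) SS.
Proof.
apply/setP=> M; rewrite !inE; case: (M \in G); rewrite //= andbT.
apply/forall_inP/andP=> [nsSS | [nSM /forall_inP nsSS] S0].
  split; first by apply: nsSS; rewrite setU11.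
  by apply/forall_inP=> S0 S0SS; apply: nsSS; rewrite setU1r.
by case/setU1P=> [->|/nsSS].
Qed.

Lemma spread_decomposition G : G \subset F -> exists SS,
  (forall S, S \in SS -> #|S| <= q /\ spread_core S) /\
  #|uncovered G SS| * 3 ^ q.+1 <= oddfact n * 2 ^ q.+1.
Proof.
have [k] := ubnP #|G|; elim: k G => // k IHk G ltGk GF.
have [-> | neG] := eqVneq G set0.
  exists set0; split=> [S|]; first by rewrite inE.
  by rewrite (_ : uncovered _ _ = set0) ?cards0 //; apply/setP=> M; rewrite !inE.
have [S _ maxS] := @arg_maxnP _ set0 predT (weight G) isT.
have {}maxS S' : weight G S' <= weight G S := maxS S' isT.
have [ltqS | leSq] := ltnP q #|S|.
  exists set0; split=> [S'|]; first by rewrite inE.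
  have -> : uncovered G set0 = G.
    by apply/setP=> M; rewrite !inE andb_idr // => _; apply/forall_inP=> S'; rewrite inE.
  have := card_max_weight GF maxS; rewrite -(subnKC ltqS) !expnD !mulnA.
  set d := #|S| - q.+1 => le_G.
  have le23 : 2 ^ d <= 3 ^ d by rewrite leq_exp2rW.
  by rewrite -(leq_pmul2r (expn_gt0 2 d)) (leq_trans _ le_G) // leq_mul2l le23 orbT.
have GSG : star G S \subset G by apply/subsetP=> M; rewrite inE => /andP[].
have neP : star G S != set0.
  apply: contraTneq (maxS set0) => P0.
  by rewrite weight_set0 /weight P0 cards0 !mul0n -ltnNge muln_gt0 expn_gt0 card_gt0 neG.
have ltD : #|G :\: star G S| < #|G|.
  by rewrite cardsD (setIidPr GSG) ltn_subrL !card_gt0 neP neG.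
have [SS [coreSS le_unc]] := IHk _ (leq_trans ltD ltGk) (subset_trans (subsetDl _ _) GF).
exists (S |: SS); rewrite uncoveredU1; split=> // S0 /setU1P[-> | /coreSS //].
split=> //; exists (star G S); split; last exact: spread_max_weight.
- by apply/subsetP=> M; rewrite !inE => /andP[/(subsetP GF) -> ->].
- exact: neP.
Qed.

Lemma spread_avoid P S (A : matching) : P != set0 -> spread P S -> [disjoint A & S] ->
  3 * #|A| < 2 * (2 * (n - #|S|) - 1) -> exists2 M, M \in P & [disjoint A & M].
Proof.
move=> neP spP dAS; set c := 2 * (2 * (n - #|S|) - 1) => ltAc.
pose hit := \bigcup_(e in A) [set M in P | e \in M].
have lt_hit : #|hit| * c < #|P| * c.
  apply: leq_ltn_trans (leq_mul (leq_card_bigcup _ _) (leqnn c)) _.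
  rewrite big_distrl /=; apply: (@leq_ltn_trans (#|A| * (3 * #|P|))).
    by rewrite -sum_nat_const leq_sum // => e eA; apply: (spP e); rewrite (disjointFr dAS eA).
  by rewrite mulnA mulnC ltn_pmul2l ?card_gt0 // mulnC.
have : ~~ (P \subset hit).
  by apply: contraTN lt_hit => /subset_leq_card le_P; rewrite -leqNgt leq_mul2r le_P orbT.
case/subsetPn=> M MP M_hit; exists M => //.
rewrite disjoints_subset; apply/subsetP=> e eA; rewrite inE; apply: contra M_hit => eM.
by apply/bigcupP; exists e; rewrite // inE MP.
Qed.

Variable t : nat.
Hypothesis tiF : t_intersecting t F.
Hypotheses (q_gt0 : 0 < q) (le_q_n : 4 * q <= n).

Lemma spread_cores_intersect S S' : #|S| <= q -> #|S'| <= q ->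
  spread_core S -> spread_core S' -> t <= #|S :&: S'|.
Proof.
move=> leSq leS'q [P [PS neP spP]] [P' [P'S' neP' spP']].
have [M MP dM] : exists2 M, M \in P & [disjoint S' :\: S & M].
  apply: spread_avoid spP _ _ => //; first by rewrite disjoints_subset setDE subsetIr.
  have : #|S' :\: S| <= q := leq_trans (subset_leq_card (subsetDl _ _)) leS'q.
  by lia.
have /andP[MF SM] : (M \in F) && (S \subset M) by have := subsetP PS M MP; rewrite inE.
have [M' M'P' dM'] : exists2 M', M' \in P' & [disjoint M :\: S' & M'].
  apply: spread_avoid spP' _ _ => //; first by rewrite disjoints_subset setDE subsetIr.
  have /andP[_ /eqP cM] := npF MF.
  have : #|M :\: S'| <= n - 1 by rewrite -cM subset_leq_card ?subsetDl.
  by lia.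
have /andP[M'F _] : (M' \in F) && (S' \subset M') by have := subsetP P'S' M' M'P'; rewrite inE.
apply: leq_trans (_ : #|M :&: M'| <= _).
  by move/forall_inP/(_ M MF)/forall_inP/(_ M' M'F): tiF.
apply/subset_leq_card/subsetP=> e /setIP[eM eM'].
have eS' : e \in S' by apply: contraTT eM' => eS'; rewrite (disjointFr dM') // inE eS'.
by rewrite inE eS' andbT; apply: contraTT eM => eS; rewrite (disjointFr dM) // inE eS.
Qed.

Lemma spread_approximation :
  oddfact n * 2 ^ q.+1 <= oddfact (n - t.+1) * 3 ^ q.+1 ->
  exists SS, [/\ forall S, S \in SS -> #|S| <= q, t_intersecting t SS
               & #|uncovered F SS| <= oddfact (n - t.+1)].
Proof.
move=> le_ratio; have [SS [coreSS le_unc]] := spread_decomposition (subxx F).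
exists SS; split.
- by move=> S /coreSS[].
- apply/forall_inP=> S /coreSS[leSq coreS]; apply/forall_inP=> S' /coreSS[leS'q coreS'].
  exact: spread_cores_intersect.
- by rewrite -(leq_pmul2r (expn_gt0 3 q.+1)) (leq_trans le_unc).
Qed.

End SpreadApproximation.

Section Covering.
Variables n t : nat.
Local Notation matching := {set {set 'I_(2 * n - 1)}}.
Implicit Types (S T M : matching) (SS : {set matching}).
Variable F : {set matching}.
Hypothesis npF : forall M, M \in F -> near_perfect M.
Hypothesis tiF : t_intersecting t F.
Local Notation N := (oddfact (n - t.+1)).

Lemma card_bigcup_star_setU1 T (B : matching) : #|T| = t ->
  #|\bigcup_(e in B :\: T) star F (e |: T)| <= #|B| * N.
Proof.
move=> cT; apply: leq_trans (leq_card_bigcup _ _) _.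
apply: leq_trans (_ : _ <= \sum_(e in B :\: T) N) _.
  apply: leq_sum => e; rewrite inE => /andP[eT _].
  have <- : #|e |: T| = t.+1 by rewrite cardsU1 eT cT.
  exact: card_star.
by rewrite sum_nat_const leq_mul2r subset_leq_card ?subsetDl ?orbT.
Qed.

Lemma card_star_not_common T M1 : #|T| = t -> M1 \in F -> ~~ (T \subset M1) ->
  #|star F T| <= (n - 1) * N.
Proof.
move=> cT M1F nTM1; have /andP[_ /eqP <-] := npF M1F.
apply: leq_trans (card_bigcup_star_setU1 M1 cT); apply/subset_leq_card/subsetP=> M.
rewrite inE => /andP[MF TM].
have tiM : #|T| <= #|M :&: M1|.
  by rewrite cT; move/forall_inP/(_ M MF)/forall_inP/(_ M1 M1F): tiF.
have [e /setIP[eM eM1] eT] := exists_common_notin TM nTM1 tiM.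
by apply/bigcupP; exists e; rewrite !inE ?eT ?eM1 // MF subUset sub1set eM TM.
Qed.


Lemma card_covered_no_common_subset q SS : (forall S, S \in SS -> #|S| <= q) ->
  t_intersecting t SS -> (forall T, #|T| = t -> exists2 S, S \in SS & ~~ (T \subset S)) ->
  #|F :\: uncovered F SS| <= q ^ t * q * N.
Proof.
move=> leSSq tiSS noT; have [-> | [S0 S0SS]] := set_0Vmem SS.
  rewrite (_ : F :\: _ = set0) ?cards0 //; apply/setP=> M; rewrite !inE.
  by case: (M \in F); rewrite //= andbT; apply/negbF/forall_inP=> S; rewrite inE.
pose pickS T := odflt S0 [pick S in SS | ~~ (T \subset S)].
have pickSP T : #|T| = t -> pickS T \in SS /\ ~~ (T \subset pickS T).
  move=> cT; rewrite /pickS; case: pickP => [S /andP[] // | none] /=.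
  by have [S SSS nTS] := noT T cT; move: (none S); rewrite SSS nTS.
pose TT := [set T : matching | T \subset S0 & #|T| == t].
apply: (@leq_trans #|\bigcup_(T in TT) \bigcup_(e in pickS T :\: T) star F (e |: T)|).
  apply/subset_leq_card/subsetP=> M /setDP[MF].
  rewrite inE MF negb_forall_in => /exists_inP[S SSS /negPn SM].
  have tiSS0 : t <= #|S :&: S0|.
    by move/forall_inP/(_ S SSS)/forall_inP/(_ S0 S0SS): tiSS.
  have [T sT cT] := exists_card_subset tiSS0.
  have [sTS sTS0] : T \subset S /\ T \subset S0 by apply/andP; rewrite -subsetI.
  have [pSS nTp] := pickSP T cT.
  have tiSp : #|T| <= #|S :&: pickS T|.
    by rewrite cT; move/forall_inP/(_ S SSS)/forall_inP/(_ _ pSS): tiSS.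
  have [e /setIP[eS ep] eT] := exists_common_notin sTS nTp tiSp.
  apply/bigcupP; exists T; first by rewrite inE sTS0 cT eqxx.
  apply/bigcupP; exists e; first by rewrite inE eT ep.
  by rewrite inE MF subUset sub1set (subsetP SM e eS) (subset_trans sTS SM).
apply: leq_trans (leq_card_bigcup _ _) _.
apply: (@leq_trans (\sum_(T in TT) q * N)).
  apply: leq_sum => T; rewrite inE => /andP[_ /eqP cT].
  apply: leq_trans (card_bigcup_star_setU1 _ cT) _.
  by rewrite leq_mul2r leSSq ?orbT //; case: (pickSP T cT).
rewrite sum_nat_const mulnA !leq_mul2r cards_draws.
by rewrite (leq_trans (leq_bin2l _ (leSSq _ S0SS))) ?leq_bin_exp ?orbT.
Qed.

Variable q : nat.
Hypotheses (q_gt0 : 0 < q) (le_q_n : 4 * q <= n) (le_t_n : 2 * t.+1 <= n).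
Hypothesis le_qt_n : q ^ t.+1 <= 2 * (n - t.+1).
Hypothesis le_ratio : (2 * n) ^ t.+1 * 2 ^ q.+1 <= 3 ^ q.+1.

Theorem card_t_intersecting_near_perfect : #|F| <= oddfact (n - t).
Proof.
have oddfact_nt : oddfact (n - t) = (2 * (n - t.+1)).+1 * N.
  by rewrite -oddfactS; congr oddfact; lia.
have le_fact_ratio : oddfact n * 2 ^ q.+1 <= N * 3 ^ q.+1.
  apply: leq_trans (leq_mul (leq_oddfact_sub (_ : t.+1 <= n)) (leqnn _)) _; first by lia.
  by rewrite mulnAC [_ * N]mulnC leq_mul2l le_ratio orbT.
have [SS [leSSq tiSS le_unc]] := spread_approximation npF tiF q_gt0 le_q_n le_fact_ratio.
have card_F : #|F| = #|uncovered F SS| + #|F :\: uncovered F SS|.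
  rewrite -(cardsID (uncovered F SS) F) (setIidPr _) //.
  by apply/subsetP=> M; rewrite inE => /andP[].
have [/existsP[T /andP[/eqP cT /forall_inP TSS]] | /existsPn noT] :=
  boolP [exists T : matching, (#|T| == t) && [forall S in SS, T \subset S]].
- have sub : F :\: uncovered F SS \subset star F T.
    apply/subsetP=> M /setDP[MF]; rewrite inE MF negb_forall_in.
    by case/exists_inP=> S /TSS TS /negPn SM; rewrite inE MF (subset_trans TS SM).
  have [FT | /subsetPn[M1 M1F nM1]] := boolP (F \subset star F T).
    by rewrite (leq_trans (subset_leq_card FT)) // -cT card_star.
  have nTM1 : ~~ (T \subset M1) by move: nM1; rewrite inE M1F.
  rewrite card_F oddfact_nt.
  have := leq_trans (subset_leq_card sub) (card_star_not_common cT M1F nTM1).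
  move/(leq_add le_unc)/leq_trans; apply.
  by rewrite -[X in X + _]mul1n -mulnDl leq_mul2r; apply/orP; right; lia.
- have noT' T : #|T| = t -> exists2 S, S \in SS & ~~ (T \subset S).
    by move=> cT; move: (noT T); rewrite cT eqxx negb_forall_in => /exists_inP[S]; exists S.
  rewrite card_F oddfact_nt.
  apply: leq_trans (leq_add le_unc (card_covered_no_common_subset leSSq tiSS noT')) _.
  by rewrite -expnSr -[X in X + _]mul1n -mulnDl leq_mul2r; apply/orP; right; lia.
Qed.

End Covering.

Lemma leq_exp_ffact x b : (x - b) ^ b <= x ^_ b.
Proof.
elim: b => // b IHb; rewrite ffactnSr expnSr leq_mul ?leq_sub2l //.
by apply: leq_trans IHb; rewrite leq_exp2rW ?leq_sub2l.
Qed.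

Lemma leq_bin_exp2 x b : 'C(x, b) <= 2 ^ x.
Proof.
elim: x b => [|x IHx] [|b] //; first by rewrite bin0 expn_gt0.
by rewrite binS expnS mul2n -addnn leq_add.
Qed.

Lemma exp2_dominates_poly C a : exists x0, forall x, x0 <= x -> C * x ^ a <= 2 ^ x.
Proof.
exists (2 * a.+1 + C * 2 ^ a * a.+1`!) => x le_x.
have [y def_x le_y] : exists2 y, x = y + a.+1 & C * 2 ^ a * a.+1`! <= y.
  by exists (x - a.+1); lia.
rewrite -(leq_pmul2r (fact_gt0 a.+1)).
apply: (@leq_trans (y ^ a.+1)); last first.
  have := leq_exp_ffact x a.+1; rewrite def_x addnK -bin_ffact => /leq_trans; apply.
  by rewrite leq_mul2r leq_bin_exp2 orbT.
apply: (@leq_trans (C * 2 ^ a * a.+1`! * y ^ a)); last first.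
  by rewrite expnSr mulnC leq_mul2l le_y orbT.
have le_xy : x ^ a <= 2 ^ a * y ^ a by rewrite -expnMn leq_exp2rW // def_x; lia.
apply: leq_trans (leq_mul (leq_mul (leqnn C) le_xy) (leqnn _)) _.
by rewrite mulnA mulnAC.
Qed.

Lemma good_parameters t : exists n0, forall n, n0 <= n -> exists q,
  [/\ 0 < q, 4 * q <= n, 2 * t.+1 <= n, q ^ t.+1 <= 2 * (n - t.+1)
    & (2 * n) ^ t.+1 * 2 ^ q.+1 <= 3 ^ q.+1].
Proof.
set a := t.+1; set D := (2 * a) ^ a + 8 * a.
have [x0 le_x0] := exp2_dominates_poly (4 * D) a.
exists (2 ^ x0) => n le_n; have n_gt0 : 0 < n by rewrite (leq_trans _ le_n) ?expn_gt0.
set k := trunc_log 2 n; set x := k.+2.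
have le_2k : 2 ^ k <= n := trunc_logP (isT : 1 < 2) n_gt0.
have lt_n : n < 2 ^ k.+1 := trunc_log_ltn n (isT : 1 < 2).
have le_Dn : D * x ^ a <= n.
  have le_x0k : x0 <= k := trunc_log_max (isT : 1 < 2) le_n.
  have le_x0x : x0 <= x by rewrite /x; lia.
  have := le_x0 x le_x0x; rewrite !expnS -mulnA => le_4.
  by rewrite -(leq_pmul2l (isT : 0 < 4)) (leq_trans le_4) // mulnA leq_pmul2l.
have le_x_xa : x <= x ^ a by rewrite -{1}(expn1 x) leq_pexp2l.
have le_qa : (2 * x * a - 1) ^ a <= (2 * a) ^ a * x ^ a.
  by rewrite -expnMn leq_exp2rW //; lia.
(* With q.+1 = 2 x (t+1), 2n <= 2^x and 8 <= 9 give the ratio bound, while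
   q^(t+1) is polylogarithmic in n. *)
exists (2 * x * a - 1); have -> : (2 * x * a - 1).+1 = 2 * (x * a) by lia.
move: le_Dn le_x_xa le_qa; rewrite /D; set P := (2 * a) ^ a; set X := x ^ a.
set Q := (2 * x * a - 1) ^ a => le_Dn le_x_xa le_qa.
split; try by nia.
have le_2n : 2 * n <= 2 ^ x by rewrite /x expnS leq_mul2l ltnW.
apply: (@leq_trans (2 ^ (3 * (x * a)))).
  rewrite (mulSn 2) expnD leq_mul2r; apply/orP; right.
  by rewrite expnM leq_exp2rW.
by rewrite !expnM; do 2 apply: leq_exp2rW.
Qed.

Theorem mainTheorem10 (t : nat) :
  exists n0 : nat, forall n : nat, n0 <= n ->
    forall F : {set {set {set 'I_(2*n-1)}}},
      (forall M, M \in F -> near_perfect M) ->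
      t_intersecting t F ->
      #|F| <= oddfact (n - t).
Proof.
have [n0 good] := good_parameters t.
exists n0 => n le_n F npF tiF.
have [q [q_gt0 le_q_n le_t_n le_qt_n le_ratio]] := good n le_n.
exact: (card_t_intersecting_near_perfect npF tiF q_gt0 le_q_n le_t_n le_qt_n le_ratio).
Qed.
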